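(* Let $(\Omega,\mathcal{F})$ be a measurable space, $\mathcal{P}$ a nonempty set of probability measures on it, $\hat{\mathbb{E}}[Z]=\sup_{P\in\mathcal{P}}E_P[Z]$, and let $X,Y$ be random variables with $\hat{\mathbb{E}}[X^2]+\hat{\mathbb{E}}[Y^2]<\infty$. Put $U=\frac{X+Y}{2}$ and $V=\frac{X-Y}{2}$. Then $$\max_{\beta\in\mathbb{R}}\min_{\alpha\in\mathbb{R}}\hat{\mathbb{E}}[(U-\alpha)^2-(V-\beta)^2]=\max_{\beta\in M_V}\min_{\alpha\in M_U}\hat{\mathbb{E}}[(U-\alpha)^2-(V-\beta)^2],$$ $$\min_{\alpha\in\mathbb{R}}\max_{\beta\in\mathbb{R}}\left(-\hat{\mathbb{E}}[-(U-\alpha)^2+(V-\beta)^2]\right)=\min_{\alpha\in M_U}\max_{\beta\in M_V}\left(-\hat{\mathbb{E}}[-(U-\alpha)^2+(V-\beta)^2]\right).$$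
   Context: For a random variable $W$ with $\hat{\mathbb{E}}[W^2]<\infty$: $\overline{\mu}_W=\hat{\mathbb{E}}[W]$, $\underline{\mu}_W=-\hat{\mathbb{E}}[-W]$, and $M_W=[\underline{\mu}_W,\overline{\mu}_W]$. *)

From HB Require Import structures.
From mathcomp Require Import all_boot all_order all_algebra.
From mathcomp Require Import all_classical all_reals all_analysis.
Set Implicit Arguments. Unset Strict Implicit. Unset Printing Implicit Defensive.
Import Order.TTheory GRing.Theory Num.Theory.
Local Open Scope classical_set_scope.
Local Open Scope ring_scope.

Definition Ehat d (T : measurableType d) (R : realType)
  (PP : set (probability T R)) (Z : T -> R) : \bar R :=
  ereal_sup [set ('E_p[Z])%E | p in PP].

Definition Mset d (T : measurableType d) (R : realType)
  (PP : set (probability T R)) (W : T -> R) : set R :=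
  [set a : R | (- Ehat PP (fun w => (- W w)%R) <= a%:E)%E /\ (a%:E <= Ehat PP W)%E].

Definition is_min_on (R : realType) (A : set R) (f : R -> \bar R) (m : \bar R) :=
  (exists2 a, A a & f a = m) /\ (forall a, A a -> (m <= f a)%E).

Definition is_max_on (R : realType) (A : set R) (f : R -> \bar R) (m : \bar R) :=
  (exists2 a, A a & f a = m) /\ (forall a, A a -> (f a <= m)%E).

Definition is_maxmin (R : realType) (B A : set R) (F : R -> R -> \bar R) (v : \bar R) :=
  exists g : R -> \bar R,
    (forall b, B b -> is_min_on A (fun a => F a b) (g b)) /\ is_max_on B g v.

Definition is_minmax (R : realType) (A B : set R) (F : R -> R -> \bar R) (v : \bar R) :=
  exists g : R -> \bar R,
    (forall a, A a -> is_max_on B (fun b => F a b) (g a)) /\ is_min_on A g v.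

(* Under a single measure P,
     E_P[(U - a)^2 - (V - b)^2] = Var_P U - Var_P V + (a - E_P U)^2 - (b - E_P V)^2,
   so the objective is the pointwise supremum over P of such quadratics.  Every
   mean E_P U lies in M_U = [inf_P E_P U, sup_P E_P U], so projecting a onto M_U
   shrinks each (a - E_P U)^2 and can only decrease the objective, while
   projecting b onto M_V can only increase it.  Hence the inner minimum and the
   outer maximum over the whole line may be taken over M_U and M_V, where they
   exist by the extreme value theorem because the objective is Lipschitz on that
   box.  The min-max identity is the max-min identity for (V, U) with the sign
   reversed. *)

From HB Require Import structures.
From mathcomp Require Import all_boot all_order all_algebra.
From mathcomp Require Import all_classical all_reals all_analysis.
From mathcomp Require Import ring lra measurable_realfun.
Import Order.TTheory GRing.Theory Num.Theory.
Import numFieldNormedType.Exports.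
Local Open Scope classical_set_scope.
Local Open Scope ring_scope.

Section clamp.
Context {R : realType}.
Implicit Types (l u x z : R) (f : R -> R).

Definition clamp l u x := Num.max l (Num.min x u).

Lemma clamp_itv l u x : l <= u -> clamp l u x \in `[l, u].
Proof. by move=> lu; rewrite in_itv /= le_max lexx ge_max lu ge_min lexx orbT. Qed.

Lemma clamp_sqr_dist {l u} x {z} : z \in `[l, u] -> (clamp l u x - z) ^+ 2 <= (x - z) ^+ 2.
Proof.
rewrite in_itv /= => /andP[lz zu]; rewrite /clamp.
by have [xu|ux] := leP x u; have [lx|xl] := leP l _; nra.
Qed.

Lemma within_continuous_lipschitz (A : set R) f (L : R) :
  (forall x y, A x -> A y -> f x <= f y + L * `|x - y|) -> {within A, continuous f}.
Proof.
move=> fL; apply/subspace_continuousP => x Ax; apply/cvgrPdist_le => e e0.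
have L1 : 0 < `|L| + 1 by rewrite ltr_wpDl.
exists (e / (`|L| + 1)); first by rewrite /= divr_gt0.
move=> y /= xy Ay; rewrite ltr_pdivlMr // in xy.
have := fL x y Ax Ay; have := fL y x Ay Ax; rewrite (distrC y x) => fyx fxy.
have LA : L * `|x - y| <= `|L| * `|x - y| by rewrite ler_wpM2r // ler_norm.
have := normr_ge0 (x - y); have := normr_ge0 L.
rewrite /from_subspace ler_norml => *; apply/andP; split; nra.
Qed.

Lemma clamp_argmin f l u : l <= u -> {within `[l, u], continuous f} ->
  (forall x, f (clamp l u x) <= f x) -> exists2 a, a \in `[l, u] & forall x, f a <= f x.
Proof.
move=> lu fc fclamp; have [a al amin] := EVT_min lu fc.
by exists a => // x; apply: le_trans (fclamp x); apply/amin/clamp_itv.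
Qed.

Lemma clamp_argmax f l u : l <= u -> {within `[l, u], continuous f} ->
  (forall x, f x <= f (clamp l u x)) -> exists2 a, a \in `[l, u] & forall x, f x <= f a.
Proof.
move=> lu fc fclamp; have [a al amax] := EVT_max lu fc.
by exists a => // x; apply: le_trans (fclamp x) _; apply/amax/clamp_itv.
Qed.

End clamp.

Lemma sqr_dist_lipschitz {R : realType} {l u x y z : R} :
  x \in `[l, u] -> y \in `[l, u] -> z \in `[l, u] ->
  (x - z) ^+ 2 <= (y - z) ^+ 2 + 2 * (u - l) * `|x - y|.
Proof.
rewrite !in_itv /= => /andP[lx xu] /andP[ly yu] /andP[lz zu].
have [yx|xy] := leP y x.
- rewrite ger0_norm ?subr_ge0 //; nra.
- rewrite ltr0_norm ?subr_lt0 //; nra.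
Qed.

Lemma in_itv_inf_sup {R : realType} (E : set R) x :
  has_lbound E -> has_ubound E -> E x -> x \in `[inf E, sup E].
Proof. by move=> lE uE Ex; rewrite in_itv /= ge_inf // ub_le_sup. Qed.

Section clamp_maxmin.
Variables (R : realType) (f : R -> R -> R) (la ua lb ub L : R).
Hypotheses (la_ua : la <= ua) (lb_ub : lb <= ub).
Hypothesis f_clampl : forall a b, f (clamp la ua a) b <= f a b.
Hypothesis f_clampr : forall a b, f a b <= f a (clamp lb ub b).
Hypothesis f_lipl : forall a a' b, a \in `[la, ua] -> a' \in `[la, ua] ->
  f a b <= f a' b + L * `|a - a'|.
Hypothesis f_lipr : forall a b b', b \in `[lb, ub] -> b' \in `[lb, ub] ->
  f a b <= f a b' + L * `|b - b'|.

Lemma clamp_maxmin : exists v,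
  is_maxmin setT setT (fun a b => (f a b)%:E) v /\
  is_maxmin `[lb, ub] `[la, ua] (fun a b => (f a b)%:E) v.
Proof.
have argmin b : exists a, a \in `[la, ua] /\ forall x, f a b <= f x b.
  have [|a ain amin] := clamp_argmin _ _ _ la_ua _ (f_clampl^~ b).
    by apply: within_continuous_lipschitz => x y; apply: f_lipl.
  by exists a.
have [amin aminP] := choice argmin.
pose g b := f (amin b) b.
have g_lip b b' : b \in `[lb, ub] -> b' \in `[lb, ub] -> g b <= g b' + L * `|b - b'|.
  move=> bin bin'; apply: le_trans _ (f_lipr (amin b') _ _ bin bin'); exact: (aminP b).2.
have g_clamp b : g b <= g (clamp lb ub b).
  exact: le_trans ((aminP b).2 _) (f_clampr _ _).
have [|bmax bin bmaxP] := clamp_argmax _ _ _ lb_ub _ g_clamp.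
  exact: within_continuous_lipschitz g_lip.
exists (g bmax)%:E; split; exists (fun b => (g b)%:E); split.
- move=> b _; split; first by exists (amin b).
  by move=> a _; rewrite lee_fin (aminP b).2.
- by split; [exists bmax | move=> b _; rewrite lee_fin].
- move=> b _; split; first by exists (amin b) => //; exact: (aminP b).1.
  by move=> a _; rewrite lee_fin (aminP b).2.
- by split; [exists bmax | move=> b _; rewrite lee_fin].
Qed.

End clamp_maxmin.

Lemma is_minmax_oppe (R : realType) (A B : set R) (F : R -> R -> \bar R) v :
  is_maxmin A B F v -> is_minmax A B (fun a b => - F b a)%E (- v)%E.
Proof.
move=> [g [g_min [[b0 Ab0 <-] g_max]]]; exists (fun a => - g a)%E; split.
  move=> a Aa; have [[b Bb <-] Fmin] := g_min a Aa.
  by split=> [|b' Bb']; [exists b | rewrite leeN2 Fmin].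
by split=> [|a Aa]; [exists b0 | rewrite leeN2 g_max].
Qed.

Section quadratic_family.
Context {R : realType} {I : Type}.
Variables (S : set I) (k m n : I -> R).
Hypotheses (S0 : S !=set0) (k_ub : has_ubound (k @` S)).
Hypotheses (m_lb : has_lbound (m @` S)) (m_ub : has_ubound (m @` S)).
Hypotheses (n_lb : has_lbound (n @` S)) (n_ub : has_ubound (n @` S)).

Local Notation quad i a b := (k i + (a - m i) ^+ 2 - (b - n i) ^+ 2).

Definition quad_sup a b := sup [set quad i a b | i in S].

Let m_itv {i} : S i -> m i \in `[inf (m @` S), sup (m @` S)].
Proof. by move=> Si; apply: in_itv_inf_sup => //; exists i. Qed.

Let n_itv {i} : S i -> n i \in `[inf (n @` S), sup (n @` S)].
Proof. by move=> Si; apply: in_itv_inf_sup => //; exists i. Qed.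

Lemma has_ubound_quad a b : has_ubound [set quad i a b | i in S].
Proof.
have [K Kub] := k_ub.
exists (K + (a - inf (m @` S)) ^+ 2 + (a - sup (m @` S)) ^+ 2) => _ [i Si <-].
have := m_itv Si; rewrite in_itv /= => /andP[li iu].
have : k i <= K by apply: Kub; exists i.
have : (a - m i) ^+ 2 <= (a - inf (m @` S)) ^+ 2 + (a - sup (m @` S)) ^+ 2.
  have := sqr_ge0 (a - sup (m @` S)); have := sqr_ge0 (a - inf (m @` S)).
  have [am|ma] := leP a (m i).
  - have : 0 <= (sup (m @` S) - m i) * (sup (m @` S) + m i - 2 * a).
      by apply: mulr_ge0; lra.
    nra.
  - have : 0 <= (m i - inf (m @` S)) * (2 * a - m i - inf (m @` S)).
      by apply: mulr_ge0; lra.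
    nra.
have := sqr_ge0 (b - n i); lra.
Qed.

Lemma le_quad_sup i a b : S i -> quad i a b <= quad_sup a b.
Proof. by move=> Si; apply: ub_le_sup; [exact: has_ubound_quad | exists i]. Qed.

Lemma quad_sup_le_shift a b a' b' d :
  (forall i, S i -> quad i a b <= quad i a' b' + d) -> quad_sup a b <= quad_sup a' b' + d.
Proof.
move=> le_ab; have [i0 Si0] := S0.
apply: ge_sup; first by exists (quad i0 a b), i0.
by move=> _ [i Si <-]; apply: le_trans (le_ab i Si) _; rewrite lerD2r le_quad_sup.
Qed.

Lemma quad_sup_maxmin : exists v,
  is_maxmin setT setT (fun a b => (quad_sup a b)%:E) v /\
  is_maxmin `[inf (n @` S), sup (n @` S)] `[inf (m @` S), sup (m @` S)]
    (fun a b => (quad_sup a b)%:E) v.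
Proof.
have [i0 Si0] := S0.
set la := inf (m @` S); set ua := sup (m @` S); set lb := inf (n @` S).
set ub := sup (n @` S).
have la_ua : la <= ua by have := m_itv Si0; rewrite in_itv /= => /andP[]; exact: le_trans.
have lb_ub : lb <= ub by have := n_itv Si0; rewrite in_itv /= => /andP[]; exact: le_trans.
apply: (@clamp_maxmin _ _ _ _ _ _ (2 * (ua - la) + 2 * (ub - lb))) => //.
- move=> a b; rewrite -[leRHS]addr0; apply: quad_sup_le_shift => i Si.
  by have := clamp_sqr_dist a (m_itv Si); lra.
- move=> a b; rewrite -[leRHS]addr0; apply: quad_sup_le_shift => i Si.
  by have := clamp_sqr_dist b (n_itv Si); lra.
- move=> a a' b ain ain'; apply: quad_sup_le_shift => i Si.
  have := sqr_dist_lipschitz ain ain' (m_itv Si).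
  have : 2 * (ua - la) * `|a - a'| <= (2 * (ua - la) + 2 * (ub - lb)) * `|a - a'|.
    by rewrite ler_wpM2r // lerDl mulr_ge0 // subr_ge0.
  lra.
- move=> a b b' bin bin'; apply: quad_sup_le_shift => i Si.
  have := sqr_dist_lipschitz bin' bin (n_itv Si); rewrite distrC.
  have : 2 * (ub - lb) * `|b - b'| <= (2 * (ua - la) + 2 * (ub - lb)) * `|b - b'|.
    by rewrite ler_wpM2r // lerDr mulr_ge0 // subr_ge0.
  lra.
Qed.

End quadratic_family.

Section second_moment.
Context {d : measure_display} {T : measurableType d} {R : realType} {P : probability T R}.

Lemma Lfun2_expectation_sqr (W : T -> R) : measurable_fun setT W ->
  ('E_P[fun w => (W w ^+ 2)%R] < +oo)%E -> W \in Lfun P 2%:E.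
Proof.
move=> mW W2; rewrite inE; apply/andP; split; first by rewrite inE.
rewrite inE /= /finite_norm (@lty_poweRy _ _ 2%R) // poweR_Lnorm //.
under eq_integral => w _ do rewrite /= (powR_mulrn 2 (normr_ge0 _)) (real_normK (num_real _)).
by move: W2; rewrite unlock.
Qed.

Section centered.
Context {W : T -> R} (a : R).
Hypothesis W2 : W \in Lfun P 2%:E.

Let Wa2 : W \- cst a \in Lfun P 2%:E.
Proof.
apply: rpredB => //; first exact: lee1n.
by move=> ?; exact: Lfun_cst.
Qed.

Lemma Lfun1_sqr_dist : (fun w => (W w - a) ^+ 2) \in Lfun P 1.
Proof. exact/Lfun1_integrable/(Lfun2_integrable_sqr Wa2). Qed.

Lemma expectation_sqr_dist :
  'E_P[fun w => ((W w - a) ^+ 2)%R]%E = (fine 'V_P[W] + (fine 'E_P[W] - a) ^+ 2)%:E.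
Proof.
have W1 := Lfun_subset12 (fin_num_measure P _ measurableT) W2.
have -> : (fun w => (W w - a) ^+ 2) = ((W \- cst a) ^+ 2)%R by [].
move: (varianceE Wa2); rewrite varianceB_cst_r // expectationB ?Lfun_cst // expectation_cst.
rewrite -{1}(fineK (variance_fin_num W2)) -{1}(fineK (expectation_fin_num W1)).
rewrite -EFinB -EFin_expe => vE.
by rewrite EFinD vE subeK.
Qed.

End centered.

End second_moment.

Section sublinear_expectation.
Context {d : measure_display} {T : measurableType d} {R : realType}.
Context {PP : set (probability T R)}.
Hypothesis PP0 : PP !=set0.

Definition means (W : T -> R) := [set fine 'E_p[W] | p in PP].

Lemma le_Ehat (Z : T -> R) {p} : PP p -> ('E_p[Z] <= Ehat PP Z)%E.
Proof. by move=> Pp; apply: ereal_sup_ubound; exists p. Qed.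

Lemma Ehat_ge0 (Z : T -> R) : (forall w, 0 <= Z w) -> (0 <= Ehat PP Z)%E.
Proof.
have [p Pp] := PP0; move=> Z0.
exact: le_trans (expectation_ge0 p Z0) (le_Ehat Z Pp).
Qed.

Lemma Ehat_le_add (Z Z1 Z2 : T -> R) :
  measurable_fun setT Z -> measurable_fun setT Z1 -> measurable_fun setT Z2 ->
  (forall w, 0 <= Z w) -> (forall w, 0 <= Z1 w) -> (forall w, 0 <= Z2 w) ->
  (forall w, Z w <= Z1 w + Z2 w) -> (Ehat PP Z <= Ehat PP Z1 + Ehat PP Z2)%E.
Proof.
move=> mZ mZ1 mZ2 Z0 Z10 Z20 leZ; apply: ge_ereal_sup => _ [p Pp <-].
apply: (@le_trans _ _ 'E_p[Z1 \+ Z2]%E).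
  apply: expectation_le => //; first exact: measurable_funD.
    by move=> w; apply: addr_ge0.
  exact: aeW.
have -> : 'E_p[Z1 \+ Z2]%E = ('E_p[Z1] + 'E_p[Z2])%E.
  rewrite unlock; under eq_integral => w _ do rewrite EFinD.
  by rewrite ge0_integralD // => [w _||w _|]; rewrite ?lee_fin //; exact/measurable_EFinP.
exact: leeD (le_Ehat Z1 Pp) (le_Ehat Z2 Pp).
Qed.

Lemma Ehat_EFin {Z : T -> R} {z : probability T R -> R} :
  has_ubound (z @` PP) -> (forall p, PP p -> 'E_p[Z]%E = (z p)%:E) ->
  Ehat PP Z = (sup (z @` PP))%:E.
Proof.
move=> z_ub EZ; rewrite /Ehat (eq_imagel EZ) -(image_comp z EFin).
by rewrite ereal_sup_EFin //; apply: image_nonempty.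
Qed.

Section square_integrable.
Context {W : T -> R}.
Hypotheses (mW : measurable_fun setT W) (W2 : (Ehat PP (fun w => (W w ^+ 2)%R) < +oo)%E).

Lemma Lfun2_Ehat {p} : PP p -> W \in Lfun p 2%:E.
Proof.
by move=> Pp; apply: Lfun2_expectation_sqr => //; exact: le_lt_trans (le_Ehat _ Pp) W2.
Qed.

Lemma variance_mean_sqr_le {p} : PP p ->
  fine 'V_p[W] + fine 'E_p[W] ^+ 2 <= fine (Ehat PP (fun w => W w ^+ 2)).
Proof.
move=> Pp; have := expectation_sqr_dist 0 (Lfun2_Ehat Pp).
under eq_fun do rewrite subr0; rewrite subr0 => EW2.
have W2_ge0 : (0 <= Ehat PP (fun w => (W w ^+ 2)%R))%E.
  by apply: Ehat_ge0 => w; exact: sqr_ge0.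
by rewrite -lee_fin -EW2 fineK ?ge0_fin_numE // le_Ehat.
Qed.

Let Lfun1_Ehat {p} : PP p -> W \in Lfun p 1.
Proof. by move=> Pp; apply: Lfun_subset12 (Lfun2_Ehat Pp); exact: fin_num_measure. Qed.

Let mean_le {p} : PP p -> `|fine 'E_p[W]| <= fine (Ehat PP (fun w => (W w ^+ 2)%R)) + 1.
Proof.
move=> Pp; have := variance_mean_sqr_le Pp.
have := fine_ge0 (variance_ge0 p W); have := sqr_ge0 (`|fine 'E_p[W]| - 1).
rewrite -[fine 'E_p[W] ^+ 2]real_normK ?num_real //; nra.
Qed.

Lemma has_lbound_means : has_lbound (means W).
Proof.
exists (- (fine (Ehat PP (fun w => (W w ^+ 2)%R)) + 1)) => _ [p Pp <-].
by have := mean_le Pp; rewrite ler_norml => /andP[].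
Qed.

Lemma has_ubound_means : has_ubound (means W).
Proof.
exists (fine (Ehat PP (fun w => (W w ^+ 2)%R)) + 1) => _ [p Pp <-].
by have := mean_le Pp; rewrite ler_norml => /andP[].
Qed.

Lemma Mset_means : Mset PP W = `[inf (means W), sup (means W)]%classic.
Proof.
have EW p : PP p -> 'E_p[W]%E = (fine 'E_p[W])%:E.
  by move=> Pp; rewrite fineK // expectation_fin_num // Lfun1_Ehat.
have ENW p : PP p -> 'E_p[fun w => (- W w)%R]%E = (- fine 'E_p[W])%:E.
  move=> Pp; rewrite EFinN -EW // -mulN1e -expectationZl ?Lfun1_Ehat //.
  by congr expectation; apply/funext => w /=; rewrite mulrN1.
have NmeansE : [set - fine 'E_p[W] | p in PP] = -%R @` means W by rewrite image_comp.
rewrite /Mset (Ehat_EFin has_ubound_means EW) (Ehat_EFin _ ENW); last first.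
  by rewrite NmeansE; apply/has_lb_ubN/has_lbound_means.
rewrite NmeansE -EFinN -/(inf (means W)).
by apply/seteqP; split => x; rewrite /= in_itv /= !lee_fin; [case=> -> -> | case/andP=> -> ->].
Qed.

End square_integrable.

End sublinear_expectation.

Section Ehat_maxmin.
Context {d : measure_display} {T : measurableType d} {R : realType}.
Context {PP : set (probability T R)} {U V : T -> R}.
Hypothesis PP0 : PP !=set0.
Hypotheses (mU : measurable_fun setT U) (mV : measurable_fun setT V).
Hypotheses (U2 : (Ehat PP (fun w => (U w ^+ 2)%R) < +oo)%E)
  (V2 : (Ehat PP (fun w => (V w ^+ 2)%R) < +oo)%E).

Let k p := fine 'V_p[U] - fine 'V_p[V].

Let k_ub : has_ubound (k @` PP).
Proof.
exists (fine (Ehat PP (fun w => (U w ^+ 2)%R))) => _ [p Pp <-].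
have := variance_mean_sqr_le PP0 mU U2 Pp; have := fine_ge0 (variance_ge0 p V).
have := sqr_ge0 (fine 'E_p[U]); rewrite /k; lra.
Qed.

Theorem Ehat_maxmin : exists v,
  is_maxmin setT setT (fun a b => Ehat PP (fun w => (U w - a) ^+ 2 - (V w - b) ^+ 2)) v /\
  is_maxmin (Mset PP V) (Mset PP U)
    (fun a b => Ehat PP (fun w => (U w - a) ^+ 2 - (V w - b) ^+ 2)) v.
Proof.
have mU_lb := has_lbound_means PP0 mU U2; have mU_ub := has_ubound_means PP0 mU U2.
have mV_lb := has_lbound_means PP0 mV V2; have mV_ub := has_ubound_means PP0 mV V2.
have -> : (fun a b => Ehat PP (fun w => (U w - a) ^+ 2 - (V w - b) ^+ 2)) =
    fun a b => (quad_sup PP k (fun p => fine 'E_p[U]) (fun p => fine 'E_p[V]) a b)%:E.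
  apply/funext => a; apply/funext => b; apply: Ehat_EFin => //; first exact: has_ubound_quad.
  move=> p Pp; have U2p := Lfun2_Ehat mU U2 Pp; have V2p := Lfun2_Ehat mV V2 Pp.
  rewrite [X in 'E_p[X]%E](_ : _ = (fun w => (U w - a) ^+ 2) \- (fun w => (V w - b) ^+ 2)) //.
  rewrite expectationB ?Lfun1_sqr_dist // !expectation_sqr_dist // -EFinB /k.
  by congr EFin; ring.
rewrite (Mset_means PP0 mU U2) (Mset_means PP0 mV V2).
exact: quad_sup_maxmin.
Qed.

End Ehat_maxmin.

Theorem lemma3p13 (d : measure_display) (T : measurableType d) (R : realType)
  (PP : set (probability T R)) (X Y : T -> R) :
  PP !=set0 ->
  measurable_fun setT X -> measurable_fun setT Y ->
  (Ehat PP (fun w => (X w ^+ 2)%R) + Ehat PP (fun w => (Y w ^+ 2)%R) < +oo)%E ->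
  let U := fun w => (X w + Y w) / 2 in
  let V := fun w => (X w - Y w) / 2 in
  let F := fun a b => Ehat PP (fun w => (U w - a) ^+ 2 - (V w - b) ^+ 2) in
  let G := fun a b => (- Ehat PP (fun w => (- (U w - a) ^+ 2 + (V w - b) ^+ 2)%R))%E in
  (exists v, is_maxmin setT setT F v /\ is_maxmin (Mset PP V) (Mset PP U) F v) /\
  (exists v, is_minmax setT setT G v /\ is_minmax (Mset PP U) (Mset PP V) G v).
Proof.
move=> PP0 mX mY XY2 U V F G.
have mU : measurable_fun setT U by apply: measurable_funM => //; exact: measurable_funD.
have mV : measurable_fun setT V by apply: measurable_funM => //; exact: measurable_funB.
have Ehat_sqr_lty (W : T -> R) : measurable_fun setT W ->
    (forall w, W w ^+ 2 <= X w ^+ 2 + Y w ^+ 2) ->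
    (Ehat PP (fun w => (W w ^+ 2)%R) < +oo)%E.
  move=> mW leW; apply: le_lt_trans XY2.
  by apply: Ehat_le_add => //; try exact: measurable_funX; move=> w; exact: sqr_ge0.
have U2 : (Ehat PP (fun w => (U w ^+ 2)%R) < +oo)%E.
  by apply: Ehat_sqr_lty => // w; rewrite /U; have := sqr_ge0 (X w - Y w); nra.
have V2 : (Ehat PP (fun w => (V w ^+ 2)%R) < +oo)%E.
  by apply: Ehat_sqr_lty => // w; rewrite /V; have := sqr_ge0 (X w + Y w); nra.
split; first exact: Ehat_maxmin.
have [v [vR vM]] := Ehat_maxmin PP0 mV mU V2 U2.
have -> : G = fun a b => (- Ehat PP (fun w => ((V w - b) ^+ 2 - (U w - a) ^+ 2)%R))%E.
  apply/funext => a; apply/funext => b; rewrite /G.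
  by under eq_fun do rewrite addrC.
by exists (- v)%E; split; exact: is_minmax_oppe.
Qed.
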